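(* Let $f=\frac1N\sum_{i=1}^N f_i$ satisfy the Lipschitz assumptions of the context, fix $\mathbf{x}_k\in\mathbb{R}^d$, $\epsilon>0$, $\kappa_g,\kappa_b,\kappa_t>0$ and $\delta\in(0,1)$. Let the (multi)sets $\mathcal{S}^g,\mathcal{S}^b,\mathcal{S}^t$ consist of indices drawn independently and uniformly at random with replacement from $\{1,\dots,N\}$, with sizes $$n_g=\tilde{\mathcal{O}}\left(\frac{L_f^2}{\kappa_g^2\epsilon^2}\right),\quad n_b=\tilde{\mathcal{O}}\left(\frac{L_g^2}{\kappa_b^2\epsilon^{4/3}}\right),\quad n_t=\tilde{\mathcal{O}}\left(\frac{L_b^2}{\kappa_t^2\epsilon^{2/3}}\right),$$ where $\tilde{\mathcal{O}}$ hides poly-logarithmic factors and a polynomial dependency on $d$. Then, with probability $1-\delta$, the sub-sampled quantities satisfy $\|\mathbf{g}_k-\nabla f(\mathbf{x}_k)\|\le\kappa_g\epsilon$, $\|(\mathbf{B}_k-\nabla^2 f(\mathbf{x}_k))\mathbf{s}\|\le\kappa_b\epsilon^{2/3}\|\mathbf{s}\|$ for all $\mathbf{s}\in\mathbb{R}^d$, and $\|\mathbf{T}_k[\mathbf{s}]^2-\nabla^3 f(\mathbf{x}_k)[\mathbf{s}]^2\|\le\kappa_t\epsilon^{1/3}\|\mathbf{s}\|^2$ for all $\mathbf{s}\in\mathbb{R}^d$.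
   Context: Each $f_i\in C^3(\mathbb{R}^d,\mathbb{R})$, and $f_i,\nabla f_i,\nabla^2 f_i,\nabla^3 f_i$ are Lipschitz continuous with constants $L_f,L_g,L_b,L_t$ respectively (Euclidean norm on vectors, spectral/operator norms on matrices and tensors). Sub-sampled quantities (sums counted with multiplicity): $\mathbf{g}_k=\frac{1}{|\mathcal{S}^g|}\sum_{i\in\mathcal{S}^g}\nabla f_i(\mathbf{x}_k)$, $\mathbf{B}_k=\frac{1}{|\mathcal{S}^b|}\sum_{i\in\mathcal{S}^b}\nabla^2 f_i(\mathbf{x}_k)$, $\mathbf{T}_k=\frac{1}{|\mathcal{S}^t|}\sum_{i\in\mathcal{S}^t}\nabla^3 f_i(\mathbf{x}_k)$. For a third-order tensor $T$, $T[\mathbf{s}]^2$ is the vector $(\sum_{j,k}T_{ijk}s_js_k)_i$. $N$ denotes the number of component functions. *)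

From HB Require Import structures.
From mathcomp Require Import all_boot all_order all_algebra.
From mathcomp Require Import all_classical all_reals all_analysis.
Set Implicit Arguments. Unset Strict Implicit. Unset Printing Implicit Defensive.
Import Order.TTheory GRing.Theory Num.Theory.
Import numFieldNormedType.Exports.
Local Open Scope ring_scope.

Section Defs.
Variable R : realType.
Variable d : nat.
Notation vec := 'rV[R]_d.

Definition ev (j : 'I_d) : vec := \row_k (k == j)%:R.

Definition enorm (v : vec) : R := Num.sqrt (\sum_j v ord0 j ^+ 2).

Definition pd (f : vec -> R) (j : 'I_d) : vec -> R := fun x => 'D_(ev j) f x.

Definition grad (f : vec -> R) (x : vec) : vec := \row_j pd f j x.
Definition hess (f : vec -> R) (x : vec) : 'M[R]_d :=
  \matrix_(i, j) pd (pd f i) j x.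
Definition third (f : vec -> R) (x : vec) (i j k : 'I_d) : R :=
  pd (pd (pd f i) j) k x.

Definition C3 (f : vec -> R) : Prop :=
  (forall x, differentiable f x) /\
  (forall i x, differentiable (pd f i) x) /\
  (forall i j x, differentiable (pd (pd f i) j) x) /\
  (forall i j k, continuous (pd (pd (pd f i) j) k)).

(* Lipschitz assumptions (Euclidean norm on vectors, operator norms on
   matrices and 3-tensors, written out via their defining inequality) *)
Definition lip_f (f : vec -> R) (L : R) : Prop :=
  forall x y, `|f x - f y| <= L * enorm (x - y).
Definition lip_grad (f : vec -> R) (L : R) : Prop :=
  forall x y, enorm (grad f x - grad f y) <= L * enorm (x - y).
Definition lip_hess (f : vec -> R) (L : R) : Prop :=
  forall x y (s : vec), enorm (s *m (hess f x - hess f y)^T)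
                <= L * enorm (x - y) * enorm s.
Definition lip_third (f : vec -> R) (L : R) : Prop :=
  forall x y (u v w : vec),
    `|\sum_i \sum_j \sum_k (third f x i j k - third f y i j k)
        * u ord0 i * v ord0 j * w ord0 k|
    <= L * enorm (x - y) * enorm u * enorm v * enorm w.

(* matrix-vector product A s (s as a row vector) *)
Definition mxapp (A : 'M[R]_d) (s : vec) : vec := s *m A^T.

Definition tapp2 (T : 'I_d -> 'I_d -> 'I_d -> R) (s : vec) : vec :=
  \row_i \sum_j \sum_k T i j k * s ord0 j * s ord0 k.
End Defs.

From HB Require Import structures.
From mathcomp Require Import all_boot all_order all_algebra.
From mathcomp Require Import all_classical all_reals all_analysis.
From mathcomp Require Import ring lra.
Import Order.TTheory GRing.Theory Num.Theory.
Import numFieldNormedType.Exports.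
Local Open Scope ring_scope.

Set Implicit Arguments. Unset Strict Implicit. Unset Printing Implicit Defensive.

(* Every entry of the sub-sampled gradient, Hessian and third-derivative
   tensor is the mean of [n] uniform draws (with replacement) from [N] reals,
   and these reals are bounded by the Lipschitz constant one order lower, since
   a derivative of a Lipschitz function is bounded by its constant.  Hoeffding's
   inequality, proved by counting index sequences with the Chernoff
   exponential-moment argument, controls each entry; a union bound over the at
   most [(d + 1) ^ 3] entries, with entrywise accuracy [r / (d + 1) ^ 3], gives
   the Euclidean and operator-norm bounds, because those norms are at most
   [d ^ k] times the largest entry.  The sample sizes make each of the three
   samples fail with probability at most [delta / 3]. *)

Lemma card_le_sum_cover (T I : finType) (P : pred T) (E : I -> pred T) :
  (forall w, P w -> exists i, E i w) -> (#|P| <= \sum_i #|E i|)%N.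
Proof.
move=> hP; rewrite -sum1_card.
apply: (@leq_trans (\sum_(w | P w) \sum_i (E i w : nat))).
  by apply: leq_sum => w /hP [i Ei]; rewrite (bigD1 i) //= Ei.
apply: (@leq_trans (\sum_w \sum_i (E i w : nat))).
  by rewrite [X in (_ <= X)%N](bigID P) /= leq_addr.
rewrite exchange_big /=; apply: leq_sum => i _.
rewrite -sum1_card [X in (_ <= X)%N]big_mkcond /=.
by apply/eq_leq/eq_bigr => w _; rewrite unfold_in; case: (E i w).
Qed.

Section SampleMean.
Variable R : realType.

Definition mean n (x : 'I_n -> R) : R := n%:R^-1 * \sum_j x j.

Lemma expR_le_quadratic (y : R) : y <= 1/2 -> expR y <= 1 + y + 2 * y ^+ 2.
Proof.
move=> hy.
have eNy := expR_ge1Dx (- y).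
have eyNy : expR y * expR (- y) = 1 by rewrite expRxMexpNx_1.
have ey0 : 0 < expR y := expR_gt0 y.
have : expR y * (1 - y) <= 1.
  by rewrite -eyNy; apply: ler_wpM2l; [exact: ltW | lra].
nra.
Qed.

Lemma sum_expR_le (N : nat) (X : 'I_N -> R) (c lam : R) :
  \sum_i X i = 0 -> (forall i, `|X i| <= c) -> 0 <= lam -> lam * c <= 1/2 ->
  \sum_i expR (lam * X i) <= N%:R * expR (2 * (lam ^+ 2 * c ^+ 2)).
Proof.
move=> X0 Xc lam0 lamc.
have sqr_le i : (lam * X i) ^+ 2 <= lam ^+ 2 * c ^+ 2.
  rewrite exprMn; apply: ler_wpM2l; first exact: sqr_ge0.
  rewrite -(real_normK (num_real (X i))).
  by rewrite lerXn2r ?nnegrE ?Xc // (le_trans _ (Xc i)).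
apply: (@le_trans _ _ (\sum_(i < N) (1 + 2 * (lam ^+ 2 * c ^+ 2)) + lam * \sum_i X i)).
  rewrite mulr_sumr -big_split /=; apply: ler_sum => i _.
  have lamX : lam * X i <= 1/2.
    by apply: le_trans lamc; rewrite ler_wpM2l // (le_trans (ler_norm _)).
  by apply: le_trans (expR_le_quadratic lamX) _; have := sqr_le i; lra.
rewrite X0 mulr0 addr0 sumr_const card_ord -[_ *+ N]mulr_natl.
by apply: ler_wpM2l => //; exact: expR_ge1Dx.
Qed.

Lemma card_sum_gt_le_mgf (n N : nat) (X : 'I_N -> R) (s lam : R) :
  0 <= lam ->
  (#|[pred S : {ffun 'I_n -> 'I_N} | s < \sum_j X (S j)]|%:R : R)
    <= expR (- (lam * s)) * (\sum_i expR (lam * X i)) ^+ n.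
Proof.
move=> lam0.
have -> : expR (- (lam * s)) * (\sum_i expR (lam * X i)) ^+ n
    = \sum_(S : {ffun 'I_n -> 'I_N}) expR (lam * (\sum_j X (S j) - s)).
  rewrite -[in LHS](card_ord n) -prodr_const bigA_distr_bigA /= mulr_sumr.
  apply: eq_bigr => S _; rewrite -expR_sum -expRD; congr expR.
  by rewrite mulrBr mulr_sumr addrC.
rewrite -sumr_const [E in _ <= E](bigID [pred S : {ffun 'I_n -> 'I_N} | s < \sum_j X (S j)]) /=.
rewrite ler_wpDr //; first by apply: sumr_ge0 => S _; exact: expR_ge0.
apply: ler_sum => S; rewrite inE => hS.
apply: le_trans (expR_ge1Dx _); rewrite lerDl mulr_ge0 //.
by rewrite subr_ge0 ltW.
Qed.

Lemma card_sum_gt_le (n N : nat) (X : 'I_N -> R) (c t : R) :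
  0 < c -> 0 < t -> \sum_i X i = 0 -> (forall i, `|X i| <= c) ->
  (#|[pred S : {ffun 'I_n -> 'I_N} | n%:R * t < \sum_j X (S j)]|%:R : R)
   <= expR (- (n%:R * t ^+ 2 / (8 * c ^+ 2))) * N%:R ^+ n.
Proof.
move=> c0 t0 X0 Xc.
have [tc|ct] := leP t (2 * c); last first.
  suff -> : #|[pred S : {ffun 'I_n -> 'I_N} | n%:R * t < \sum_j X (S j)]| = 0%N.
    by rewrite mulr_ge0 ?expR_ge0 ?exprn_ge0.
  apply: eq_card0 => S; rewrite !inE; apply/negbTE; rewrite -leNgt.
  apply: (@le_trans _ _ (\sum_(j < n) c)).
    by apply: ler_sum => j _; exact: le_trans (ler_norm _) (Xc _).
  by rewrite sumr_const card_ord -[_ *+ n]mulr_natl; apply: ler_wpM2l => //; lra.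
pose lam := t / (4 * c ^+ 2).
have lam0 : 0 <= lam by rewrite divr_ge0 ?mulr_ge0 ?sqr_ge0 ?ltW.
have lamc : lam * c <= 1/2.
  have -> : lam * c = t / (4 * c) by rewrite /lam; field; rewrite gt_eqF.
  by rewrite ler_pdivrMr ?mulr_gt0 //; lra.
apply: le_trans (card_sum_gt_le_mgf _ _ _ lam0) _.
apply: le_trans (_ : _ <= expR (- (lam * (n%:R * t))) *
                          (N%:R * expR (2 * (lam ^+ 2 * c ^+ 2))) ^+ n) _.
  by rewrite ler_wpM2l ?expR_ge0 // lerXn2r ?nnegrE ?sum_expR_le //;
     apply: sumr_ge0 => i _; exact: expR_ge0.
rewrite exprMn -expRM_natl mulrCA -expRD mulrC.
suff -> : - (lam * (n%:R * t)) + n%:R * (2 * (lam ^+ 2 * c ^+ 2))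
          = - (n%:R * t ^+ 2 / (8 * c ^+ 2)) by [].
by rewrite /lam; field; rewrite gt_eqF.
Qed.

Lemma mean_sample_dev (n N : nat) (a : 'I_N -> R) (S : {ffun 'I_n -> 'I_N}) :
  (0 < n)%N ->
  mean (fun j => a (S j)) - mean a = n%:R^-1 * \sum_j (a (S j) - mean a).
Proof.
move=> n0; rewrite sumrB sumr_const card_ord mulrBr -[mean a *+ n]mulr_natl.
by rewrite mulrA mulVf ?mul1r // pnatr_eq0 -lt0n.
Qed.

Lemma sum_sub_mean (N : nat) (a : 'I_N -> R) :
  (0 < N)%N -> \sum_i (a i - mean a) = 0.
Proof.
move=> N0; rewrite sumrB sumr_const card_ord /mean -[(_ * _) *+ N]mulr_natl mulrA.
by rewrite mulfV ?mul1r ?subrr // pnatr_eq0 -lt0n.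
Qed.

Lemma norm_mean_le (N : nat) (a : 'I_N -> R) (M : R) :
  (0 < N)%N -> (forall i, `|a i| <= M) -> `|mean a| <= M.
Proof.
move=> N0 aM; rewrite /mean normrM normfV normr_nat ler_pdivrMl ?ltr0n //.
apply: le_trans (ler_norm_sum _ _ _) _.
apply: le_trans (_ : _ <= \sum_(i < N) M) _; first by apply: ler_sum => i _.
by rewrite sumr_const card_ord mulr_natl.
Qed.

Lemma card_mean_dev_gt_le (n N : nat) (a : 'I_N -> R) (M t Xv : R) :
  (0 < N)%N -> (0 < n)%N -> (forall i, `|a i| <= M) -> 0 < t ->
  32 * M ^+ 2 * Xv <= n%:R * t ^+ 2 ->
  (#|[pred S : {ffun 'I_n -> 'I_N} | t < `|mean (fun j => a (S j)) - mean a|]|%:R : R)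
   <= 2 * expR (- Xv) * N%:R ^+ n.
Proof.
move=> N0 n0 aM t0 hXv.
have M0 : 0 <= M by exact: le_trans (normr_ge0 _) (aM (Ordinal N0)).
set B := [pred S | _].
have [M_eq0|M_neq0] := eqVneq M 0.
  have a0 i : a i = 0.
    by apply/normr0_eq0/eqP; rewrite eq_le normr_ge0 andbT -M_eq0 aM.
  suff -> : #|B| = 0%N by rewrite !mulr_ge0 ?ler0n ?expR_ge0 ?exprn_ge0.
  apply: eq_card0 => S; rewrite !inE /mean !big1 => [|i _|j _]; rewrite ?a0 //.
  by rewrite !mulr0 subr0 normr0 ltNge ltW.
have M_gt0 : 0 < 2 * M by rewrite mulr_gt0 // lt_def M_neq0.
pose X i := a i - mean a.
have X0 : \sum_i X i = 0 by exact: sum_sub_mean.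
have XM i : `|X i| <= 2 * M.
  apply: le_trans (ler_normB _ _) _; have := norm_mean_le N0 aM; have := aM i; lra.
have NXM i : `|(- X i)| <= 2 * M by rewrite normrN.
have NX0 : \sum_i - X i = 0 by rewrite sumrN X0 oppr0.
have n_gt0 : 0 < (n%:R : R) by rewrite ltr0n.
pose tail (b : bool) := [pred S : {ffun 'I_n -> 'I_N} |
  n%:R * t < \sum_j (if b then X (S j) else - X (S j))].
have cover S : B S -> exists b, tail b S.
  rewrite inE mean_sample_dev // normrM normfV normr_nat ltr_pdivlMl // => hS.
  have [neg|pos] := ler0P (\sum_j X (S j)).
    by exists false; rewrite inE sumrN -(ler0_norm neg).
  by exists true; rewrite inE -(gtr0_norm pos).
have := card_le_sum_cover cover; rewrite big_bool -(ler_nat R) natrD => /le_trans.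
apply.
have exp_le : expR (- (n%:R * t ^+ 2 / (8 * (2 * M) ^+ 2))) <= expR (- Xv).
  rewrite ler_expR lerN2 ler_pdivlMr; last by rewrite mulr_gt0 // exprn_gt0.
  by rewrite (_ : 8 * (2 * M) ^+ 2 = 32 * M ^+ 2) 1?mulrC //; ring.
have tail_le b : (#|tail b|%:R : R) <= expR (- Xv) * N%:R ^+ n.
  apply: le_trans (card_sum_gt_le n (X := fun i => if b then X i else - X i)
                     M_gt0 t0 _ _) _; try by case: b.
  by apply: ler_wpM2r => //; exact: exprn_ge0.
by rewrite -mulrA mulr2n mulrDl !mul1r; exact: lerD (tail_le true) (tail_le false).
Qed.

Lemma card_mean_devs_le (I : finType) (n N : nat) (a : I -> 'I_N -> R)
    (M t Xv : R) (P : pred {ffun 'I_n -> 'I_N}) :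
  (0 < N)%N -> (0 < n)%N -> (forall k i, `|a k i| <= M) -> 0 < t ->
  32 * M ^+ 2 * Xv <= n%:R * t ^+ 2 ->
  (forall S : {ffun 'I_n -> 'I_N},
     (forall k, `|mean (fun j => a k (S j)) - mean (a k)| <= t) -> ~~ P S) ->
  (#|P|%:R : R) <= #|I|%:R * (2 * expR (- Xv) * N%:R ^+ n).
Proof.
move=> N0 n0 aM t0 hXv hP.
have cover S : P S -> exists k, [pred S : {ffun 'I_n -> 'I_N} |
    t < `|mean (fun j => a k (S j)) - mean (a k)|] S.
  move=> PS; apply/existsP; apply: contraT; rewrite negb_exists => /forallP hk.
  suff : ~~ P S by rewrite PS.
  by apply: hP => k; rewrite leNgt; exact: hk.
have := card_le_sum_cover cover; rewrite -(ler_nat R) natr_sum => /le_trans.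
apply.
rewrite mulr_natl -sumr_const; apply: ler_sum => k _.
exact: card_mean_dev_gt_le.
Qed.

End SampleMean.

Section Derivatives.
Local Open Scope classical_set_scope.
Variables (R : realType) (d : nat).
Notation vec := 'rV[R]_d.

Lemma enorm_ge0 (v : vec) : 0 <= enorm v.
Proof. exact: sqrtr_ge0. Qed.

Lemma norm_coord_le_enorm (v : vec) j : `|v ord0 j| <= enorm v.
Proof.
rewrite /enorm -(sqrtr_sqr (v ord0 j)) ler_sqrt; last first.
  by apply: sumr_ge0 => i _; exact: sqr_ge0.
by rewrite (bigD1 j) //= lerDl; apply: sumr_ge0 => i _; exact: sqr_ge0.
Qed.

Lemma enorm_le_sum_norm (v : vec) : enorm v <= \sum_j `|v ord0 j|.
Proof.
rewrite /enorm -(@ger0_norm _ (\sum_j `|v ord0 j|)); last exact: sumr_ge0.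
rewrite -sqrtr_sqr ler_sqrt; last exact: sqr_ge0.
rewrite [leRHS]expr2 mulr_suml; apply: ler_sum => i _.
rewrite -(real_normK (num_real (v ord0 i))) expr2; apply: ler_wpM2l => //.
by rewrite (bigD1 i) //= lerDl; apply: sumr_ge0 => k _; exact: normr_ge0.
Qed.

Lemma enorm_le_coord_bound (v : vec) u :
  (forall j, `|v ord0 j| <= u) -> enorm v <= d%:R * u.
Proof.
move=> vu; apply: le_trans (enorm_le_sum_norm v) _.
apply: le_trans (_ : _ <= \sum_(j < d) u) _; first by apply: ler_sum => j _.
by rewrite sumr_const card_ord mulr_natl.
Qed.

Lemma enormZ (h : R) (v : vec) : enorm (h *: v) = `|h| * enorm v.
Proof.
rewrite /enorm -sqrtr_sqr -sqrtrM ?sqr_ge0 // mulr_sumr; congr Num.sqrt.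
by apply: eq_bigr => j _; rewrite mxE exprMn.
Qed.

Lemma enorm_ev j : enorm (ev R (j : 'I_d)) = 1.
Proof.
rewrite /enorm (bigD1 j) //= big1 ?addr0; first by rewrite !mxE eqxx expr1n sqrtr1.
by move=> k /negbTE kj; rewrite !mxE kj expr0n.
Qed.

Lemma ev_mulmx_tr (A : 'M[R]_d) a b : (ev R b *m A^T) ord0 a = A a b.
Proof.
rewrite mxE (bigD1 b) //= big1 ?addr0; first by rewrite !mxE eqxx mul1r.
by move=> k /negbTE kb; rewrite !mxE kb mul0r.
Qed.

Lemma enorm_mxapp_le (A : 'M[R]_d) u s :
  (forall a b, `|A a b| <= u) -> enorm (mxapp A s) <= d%:R ^+ 2 * u * enorm s.
Proof.
move=> Au; rewrite expr2 -!mulrA; apply: enorm_le_coord_bound => a.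
rewrite mxE; apply: le_trans (ler_norm_sum _ _ _) _.
apply: le_trans (_ : _ <= \sum_(k < d) u * enorm s) _; last first.
  by rewrite sumr_const card_ord -[_ *+ d]mulr_natl.
apply: ler_sum => k _; rewrite normrM mulrC mxE.
by apply: ler_pM => //; exact: norm_coord_le_enorm.
Qed.

Lemma tapp2B (T T' : 'I_d -> 'I_d -> 'I_d -> R) s :
  tapp2 T s - tapp2 T' s = tapp2 (fun a b c => T a b c - T' a b c) s.
Proof.
apply/rowP => a; rewrite !mxE -sumrB; apply: eq_bigr => b _.
by rewrite -sumrB; apply: eq_bigr => c _; rewrite !mulrBl.
Qed.

Lemma enorm_tapp2_le (T : 'I_d -> 'I_d -> 'I_d -> R) u s :
  (forall a b c, `|T a b c| <= u) -> enorm (tapp2 T s) <= d%:R ^+ 3 * u * enorm s ^+ 2.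
Proof.
move=> Tu; rewrite exprS expr2 -!mulrA; apply: enorm_le_coord_bound => a.
rewrite mxE; apply: le_trans (ler_norm_sum _ _ _) _.
apply: le_trans (_ : _ <= \sum_(b < d) d%:R * (u * enorm s ^+ 2)) _; last first.
  by rewrite sumr_const card_ord -[_ *+ d]mulr_natl.
apply: ler_sum => b _; apply: le_trans (ler_norm_sum _ _ _) _.
apply: le_trans (_ : _ <= \sum_(c < d) u * enorm s ^+ 2) _; last first.
  by rewrite sumr_const card_ord -[_ *+ d]mulr_natl.
apply: ler_sum => c _; rewrite !normrM expr2 mulrA.
apply: ler_pM; rewrite ?mulr_ge0 ?normr_ge0 ?norm_coord_le_enorm //.
by apply: ler_pM; rewrite ?normr_ge0 ?norm_coord_le_enorm.
Qed.

Lemma norm_derive_le (g : vec -> R) (x v : vec) (K : R) : derivable g x v ->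
  (forall h : R, h != 0 -> `|g (h *: v + x) - g x| <= K * `|h|) -> `|'D_v g x| <= K.
Proof.
move=> dg gK.
have dq : (fun h : R => h^-1 *: ((g \o shift x) (h *: v) - g x)) @ 0^' --> 'D_v g x.
  exact: dg.
apply: (cvgr_to_le (cvg_norm dq)); near=> h.
have h0 : h != 0 by near: h; exact: nbhs_dnbhs_neq.
by rewrite /= normrZ normfV ler_pdivrMl ?normr_gt0 // mulrC; exact: gK.
Unshelve. all: by end_near.
Qed.

Lemma pd_mean N (f : 'I_N -> vec -> R) j :
  (forall i y, derivable (f i) y (ev R j)) ->
  pd (fun x => mean (fun i => f i x)) j = fun x => mean (fun i => pd (f i) j x).
Proof.
move=> df; apply: funext => x.
have -> : (fun y => mean (fun i => f i y)) = N%:R^-1 \*: \sum_i f i.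
  by apply: funext => y; rewrite /= fct_sumE.
rewrite /pd deriveZ /=; last by apply: derivable_sum => i; exact: df.
by rewrite derive_sum.
Qed.

Section C3.
Variable g : vec -> R.
Hypothesis C3g : C3 g.

Lemma C3_derivable j y : derivable g y (ev R j).
Proof. by case: C3g => dg _; apply: diff_derivable; exact: dg. Qed.

Lemma C3_derivable_pd i j y : derivable (pd g i) y (ev R j).
Proof. by case: C3g => _ [dg _]; apply: diff_derivable; exact: dg. Qed.

Lemma C3_derivable_pd2 i j k y : derivable (pd (pd g i) j) y (ev R k).
Proof. by case: C3g => _ [_ [dg _]]; apply: diff_derivable; exact: dg. Qed.

Lemma norm_pd_le L j x : lip_f g L -> `|pd g j x| <= L.
Proof.
move=> gL; apply: norm_derive_le; first exact: C3_derivable.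
by move=> h _; apply: le_trans (gL _ _) _; rewrite addrK enormZ enorm_ev mulr1.
Qed.

Lemma norm_pd2_le L a b x : lip_grad g L -> `|pd (pd g a) b x| <= L.
Proof.
move=> gL; apply: norm_derive_le; first exact: C3_derivable_pd.
move=> h _; have := norm_coord_le_enorm (grad g (h *: ev R b + x) - grad g x) a.
rewrite !mxE => /le_trans; apply.
by apply: le_trans (gL _ _) _; rewrite addrK enormZ enorm_ev mulr1.
Qed.

Lemma norm_pd3_le L a b c x : lip_hess g L -> `|pd (pd (pd g a) b) c x| <= L.
Proof.
move=> gL; apply: norm_derive_le; first exact: C3_derivable_pd2.
move=> h _.
have := norm_coord_le_enorm (ev R b *m (hess g (h *: ev R c + x) - hess g x)^T) a.
rewrite ev_mulmx_tr !mxE => /le_trans; apply.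
by apply: le_trans (gL _ _ _) _; rewrite addrK enormZ !enorm_ev !mulr1.
Qed.

End C3.

Section SampledDerivatives.
Variables (N n : nat) (f : 'I_N -> vec -> R) (x : vec) (S : {ffun 'I_n -> 'I_N}).
Hypothesis C3f : forall i, C3 (f i).
Let F y := mean (fun i => f i y).

Lemma grad_sample_dev_le u :
  (forall j, `|mean (fun l => pd (f (S l)) j x) - mean (fun i => pd (f i) j x)| <= u) ->
  enorm (n%:R^-1 *: \sum_l grad (f (S l)) x - grad F x) <= d%:R * u.
Proof.
move=> dev; apply: enorm_le_coord_bound => j.
rewrite !mxE summxE pd_mean; last by move=> i y; exact: C3_derivable.
by under eq_bigr do rewrite mxE; exact: dev.
Qed.

Lemma hess_sample_dev_le u s :
  (forall a b, `|mean (fun l => pd (pd (f (S l)) a) b x)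
                 - mean (fun i => pd (pd (f i) a) b x)| <= u) ->
  enorm (mxapp (n%:R^-1 *: \sum_l hess (f (S l)) x - hess F x) s)
    <= d%:R ^+ 2 * u * enorm s.
Proof.
move=> dev; apply: enorm_mxapp_le => a b.
rewrite !mxE summxE (pd_mean (j := a)); last by move=> i y; exact: C3_derivable.
rewrite (pd_mean (j := b)); last by move=> i y; exact: C3_derivable_pd.
by under eq_bigr do rewrite mxE; exact: dev.
Qed.

Lemma third_sample_dev_le u s :
  (forall a b c, `|mean (fun l => third (f (S l)) x a b c)
                   - mean (fun i => third (f i) x a b c)| <= u) ->
  enorm (tapp2 (fun a b c => n%:R^-1 * \sum_l third (f (S l)) x a b c) s
         - tapp2 (third F x) s) <= d%:R ^+ 3 * u * enorm s ^+ 2.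
Proof.
move=> dev; rewrite tapp2B; apply: enorm_tapp2_le => a b c.
rewrite /third (pd_mean (j := a)); last by move=> i y; exact: C3_derivable.
rewrite (pd_mean (j := b)); last by move=> i y; exact: C3_derivable_pd.
rewrite (pd_mean (j := c)); last by move=> i y; exact: C3_derivable_pd2.
exact: dev.
Qed.

End SampledDerivatives.

End Derivatives.

Section SampleSize.
Variable R : realType.

Definition sample_size (d : nat) (delta L r : R) : R :=
  160 * ((d.+1)%:R * (1 + ln delta^-1)) ^+ 7 * (L ^+ 2 / r ^+ 2).

Lemma sample_size_hoeffding (M r n D L Xv : R) :
  0 < r -> 1 <= D -> 0 <= L -> Xv <= 5 * D * (1 + L) ->
  160 * (D * (1 + L)) ^+ 7 * (M ^+ 2 / r ^+ 2) <= n ->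
  32 * M ^+ 2 * Xv <= n * (r / D ^+ 3) ^+ 2.
Proof.
move=> r0 D1 L0 hXv hn.
have D0 : 0 < D by lra.
have D6 : 0 < D ^+ 6 by rewrite exprn_gt0.
have {}hn : 160 * (D * (1 + L)) ^+ 7 * M ^+ 2 <= n * r ^+ 2.
  by move: hn; rewrite mulrA ler_pdivrMr // exprn_gt0.
have -> : n * (r / D ^+ 3) ^+ 2 = n * r ^+ 2 / D ^+ 6 by field; rewrite gt_eqF.
rewrite ler_pdivlMr //; apply: le_trans hn.
have M2 : 0 <= M ^+ 2 by exact: sqr_ge0.
have L7 : 1 + L <= (1 + L) ^+ 7 by rewrite ler_eXnr //; lra.
apply: le_trans (_ : _ <= 32 * M ^+ 2 * (5 * D * (1 + L)) * D ^+ 6) _.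
  by apply: ler_wpM2r; [exact: ltW | apply: ler_wpM2l => //; exact: mulr_ge0].
have -> : 32 * M ^+ 2 * (5 * D * (1 + L)) * D ^+ 6 = 160 * M ^+ 2 * (D ^+ 7 * (1 + L))
  by ring.
rewrite [leRHS](_ : _ = 160 * M ^+ 2 * (D ^+ 7 * (1 + L) ^+ 7)); last by ring.
apply: ler_wpM2l; first exact: mulr_ge0.
by apply: ler_wpM2l => //; rewrite exprn_ge0 // ltW.
Qed.

(* The exponent [5 + 3 d + ln (1 / delta)] makes the union bound over the
   at most [(d + 1) ^ 3] entries, each with two tails, cost [delta / 3]. *)
Lemma union_tail_le (d : nat) (delta : R) : 0 < delta < 1 ->
  (d.+1)%:R ^+ 3 * (2 * expR (- (5 + 3 * d%:R + ln delta^-1))) <= delta / 3.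
Proof.
case/andP=> delta0 delta1.
set D := (d.+1)%:R : R; set E := expR (5 + 3 * d%:R + ln delta^-1).
have hD : D = 1 + d%:R by rewrite /D -addn1 natrD addrC.
have e5 : 6 <= expR (5 : R) by have := expR_ge1Dx (5 : R); lra.
have D0 : 0 <= D by rewrite hD; have := ler0n R d; lra.
have D_exp : D ^+ 3 <= expR (d%:R) ^+ 3.
  by rewrite lerXn2r ?nnegrE ?expR_ge0 // hD expR_ge1Dx.
have hE : E = expR 5 * expR (d%:R) ^+ 3 * delta^-1.
  by rewrite /E !expRD lnK ?posrE ?invr_gt0 // -expRM_natl.
have E_delta : 6 * D ^+ 3 <= E * delta.
  by rewrite hE -mulrA mulVf ?gt_eqF // mulr1; apply: ler_pM; rewrite ?exprn_ge0.
have EV : E * E^-1 = 1 by rewrite mulfV // gt_eqF // expR_gt0.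
have EV0 : 0 < E^-1 by rewrite invr_gt0 expR_gt0.
rewrite expRN -/E; set D3 := D ^+ 3 in E_delta *; set V := E^-1 in EV EV0 *.
nra.
Qed.

Lemma natrX_le_succ_cube (d k : nat) :
  (k <= 3)%N -> d%:R ^+ k <= (d.+1)%:R ^+ 3 :> R.
Proof.
move=> k3; apply: le_trans (_ : _ <= (d.+1)%:R ^+ k) _.
  by rewrite lerXn2r ?nnegrE ?ler_nat.
by apply: ler_weXn2l; rewrite ?ler1n.
Qed.

Lemma natrX_mul_div_le (d k : nat) (c : R) :
  (k <= 3)%N -> 0 <= c -> d%:R ^+ k * (c / (d.+1)%:R ^+ 3) <= c.
Proof.
move=> k3 c0; rewrite mulrA ler_pdivrMr ?exprn_gt0 ?ltr0Sn // mulrC.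
by apply: ler_wpM2l => //; exact: natrX_le_succ_cube.
Qed.

Lemma card_bad_samples_le (I : finType) (d n N : nat) (a : I -> 'I_N -> R)
    (M r delta : R) (P : pred {ffun 'I_n -> 'I_N}) :
  (0 < N)%N -> (0 < n)%N -> 0 < r -> 0 < delta < 1 -> #|I|%:R <= (d.+1)%:R ^+ 3 :> R ->
  (forall k i, `|a k i| <= M) -> sample_size d delta M r <= n%:R ->
  (forall S : {ffun 'I_n -> 'I_N},
     (forall k, `|mean (fun j => a k (S j)) - mean (a k)| <= r / (d.+1)%:R ^+ 3) ->
     ~~ P S) ->
  (#|P|%:R : R) <= delta / 3 * #|{: {ffun 'I_n -> 'I_N}}|%:R.
Proof.
move=> N0 n0 r0 /[dup] delta01 /andP[delta0 delta1] cardI aM hn hP.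
set D := (d.+1)%:R : R; set L := ln delta^-1; set Xv := 5 + 3 * d%:R + L.
rewrite /sample_size -/D -/L in hn.
have hD : D = 1 + d%:R by rewrite /D -addn1 natrD addrC.
have L0 : 0 <= L by rewrite ln_ge0 // invf_ge1 // ltW.
have d0 := ler0n R d.
have t0 : 0 < r / D ^+ 3 by rewrite divr_gt0 // exprn_gt0 // ltr0Sn.
have hXv : 32 * M ^+ 2 * Xv <= n%:R * (r / D ^+ 3) ^+ 2.
  apply: sample_size_hoeffding hn => //; first by rewrite ler1n.
  by rewrite /Xv hD; nra.
apply: le_trans (card_mean_devs_le N0 n0 aM t0 hXv hP) _.
rewrite card_ffun !card_ord natrX mulrA ler_wpM2r ?exprn_ge0 //.
apply: le_trans (union_tail_le d delta01); apply: ler_wpM2r.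
  by rewrite mulr_ge0 ?expR_ge0.
done.
Qed.

End SampleSize.

Section BadSamples.
Variables (R : realType) (d N : nat) (f : 'I_N -> 'rV[R]_d -> R) (x : 'rV[R]_d).
Variables (delta r : R) (n : nat).
Hypotheses (N_gt0 : (0 < N)%N) (C3f : forall i, C3 (f i)) (delta01 : 0 < delta < 1).
Hypotheses (r_gt0 : 0 < r) (n_gt0 : (0 < n)%N).
Let F y := mean (fun i => f i y).

Lemma card_bad_grad_le Lf :
  (forall i, lip_f (f i) Lf) -> sample_size d delta Lf r <= n%:R ->
  (#|[pred S : {ffun 'I_n -> 'I_N} |
      ~~ (enorm (n%:R^-1 *: \sum_j grad (f (S j)) x - grad F x) <= r)]|%:R : R)
    <= delta / 3 * #|{: {ffun 'I_n -> 'I_N}}|%:R.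
Proof.
move=> lipf hn; apply: (card_bad_samples_le (d := d) (r := r) (M := Lf) (a := fun j i => pd (f i) j x)) => //.
- by rewrite card_ord -[X in X <= _]expr1 natrX_le_succ_cube.
- by move=> j i; exact: norm_pd_le.
move=> S dev; rewrite inE negbK; apply: le_trans (grad_sample_dev_le C3f dev) _.
exact: (@natrX_mul_div_le R d 1 r isT (ltW r_gt0)).
Qed.

Lemma card_bad_hess_le Lg :
  (forall i, lip_grad (f i) Lg) -> sample_size d delta Lg r <= n%:R ->
  (#|[pred S : {ffun 'I_n -> 'I_N} | ~~ `[< forall s,
      enorm (mxapp (n%:R^-1 *: \sum_j hess (f (S j)) x - hess F x) s)
        <= r * enorm s >]]|%:R : R)
    <= delta / 3 * #|{: {ffun 'I_n -> 'I_N}}|%:R.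
Proof.
move=> lipg hn.
apply: (card_bad_samples_le (d := d) (r := r) (M := Lg) (a := fun p i => pd (pd (f i) p.1) p.2 x)) => //.
- by rewrite card_prod card_ord natrM -expr2 natrX_le_succ_cube.
- by move=> p i; exact: norm_pd2_le.
move=> S dev; rewrite inE negbK; apply/asboolP => s.
apply: le_trans (hess_sample_dev_le C3f s (fun a b => dev (a, b))) _.
by rewrite ler_wpM2r ?enorm_ge0 // natrX_mul_div_le // ltW.
Qed.

Lemma card_bad_third_le Lb :
  (forall i, lip_hess (f i) Lb) -> sample_size d delta Lb r <= n%:R ->
  (#|[pred S : {ffun 'I_n -> 'I_N} | ~~ `[< forall s,
      enorm (tapp2 (fun a b c => n%:R^-1 * \sum_j third (f (S j)) x a b c) s
             - tapp2 (third F x) s) <= r * enorm s ^+ 2 >]]|%:R : R)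
    <= delta / 3 * #|{: {ffun 'I_n -> 'I_N}}|%:R.
Proof.
move=> lipb hn.
apply: (card_bad_samples_le (d := d) (r := r) (M := Lb) (a := fun p i => third (f i) x p.1.1 p.1.2 p.2)) => //.
- by rewrite !card_prod card_ord !natrM -expr2 -exprSr natrX_le_succ_cube.
- by move=> p i; exact: norm_pd3_le.
move=> S dev; rewrite inE negbK; apply/asboolP => s.
apply: le_trans (third_sample_dev_le C3f s (fun a b c => dev (a, b, c))) _.
by rewrite ler_wpM2r ?exprn_ge0 ?enorm_ge0 // natrX_mul_div_le // ltW.
Qed.

End BadSamples.

Lemma card_prod3_good_ge (R : realType) (A B C : finType)
    (PA : pred A) (PB : pred B) (PC : pred C) (G : {set A * B * C}) (eA eB eC : R) :
  (forall w, ~~ PA w.1.1 -> ~~ PB w.1.2 -> ~~ PC w.2 -> w \in G) ->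
  #|PA|%:R <= eA * #|A|%:R -> #|PB|%:R <= eB * #|B|%:R -> #|PC|%:R <= eC * #|C|%:R ->
  (1 - (eA + eB + eC)) * #|{: A * B * C}|%:R <= #|G|%:R.
Proof.
move=> good hA hB hC.
set BA := [set w : A * B * C | PA w.1.1]; set BB := [set w : A * B * C | PB w.1.2].
set BC := [set w : A * B * C | PC w.2].
have cardBA : #|BA| = (#|PA| * #|B| * #|C|)%N.
  by rewrite -!cardX; apply: eq_card => -[[a b] c]; rewrite !inE /= ?andbT.
have cardBB : #|BB| = (#|A| * #|PB| * #|C|)%N.
  by rewrite -!cardX; apply: eq_card => -[[a b] c]; rewrite !inE /= ?andbT.
have cardBC : #|BC| = (#|A| * #|B| * #|PC|)%N.
  by rewrite -!cardX; apply: eq_card => -[[a b] c]; rewrite !inE /= ?andbT.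
have bad : (#|~: G| <= #|BA| + #|BB| + #|BC|)%N.
  apply: leq_trans (_ : #|BA :|: BB :|: BC| <= _)%N.
    apply/subset_leq_card/fintype.subsetP => -[[a b] c]; rewrite !inE /=.
    by apply: contraNT; rewrite !negb_or => /andP[/andP[]]; exact: (good (a, b, c)).
  apply: leq_trans (leq_card_setU _ _).1 _; rewrite leq_add2r.
  exact: (leq_card_setU _ _).1.
move: bad; rewrite cardBA cardBB cardBC -(ler_nat R) !natrD !natrM => bad.
have := cardsC G; rewrite !card_prod => /(congr1 (fun m => m%:R : R)).
rewrite natrD !natrM => total.
set a : R := #|A|%:R in hA hB hC bad total *; set b : R := #|B|%:R in hA hB hC bad total *.
set c : R := #|C|%:R in hA hB hC bad total *.
have a0 : 0 <= a := ler0n R _; have b0 : 0 <= b := ler0n R _; have c0 : 0 <= c := ler0n R _.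
have tA : #|PA|%:R * b * c <= eA * (a * b * c).
  rewrite -mulrA (_ : eA * _ = eA * a * (b * c)); last by ring.
  by apply: ler_wpM2r; rewrite ?mulr_ge0.
have tB : a * #|PB|%:R * c <= eB * (a * b * c).
  rewrite (_ : a * _ * c = #|PB|%:R * (a * c)); last by ring.
  rewrite (_ : eB * _ = eB * b * (a * c)); last by ring.
  by apply: ler_wpM2r; rewrite ?mulr_ge0.
have tC : a * b * #|PC|%:R <= eC * (a * b * c).
  rewrite [leLHS]mulrC (_ : eC * _ = eC * c * (a * b)); last by ring.
  by apply: ler_wpM2r; rewrite ?mulr_ge0.
lra.
Qed.

Lemma powR_sqr (R : realType) (x a : R) : 0 <= x -> (x `^ a) ^+ 2 = x `^ (a * 2).
Proof. by move=> x0; rewrite powRrM powR_mulrn // powR_ge0. Qed.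

Theorem lemma7 (R : realType) :
  exists (C : R) (p : nat), 0 < C /\
  forall (d N : nat) (f : 'I_N -> 'rV[R]_d -> R) (Lf Lg Lb Lt : R)
    (xk : 'rV[R]_d) (eps kg kb kt delta : R) (ng nb nt : nat),
    (0 < N)%N ->
    (forall i, C3 (f i)) ->
    (forall i, lip_f (f i) Lf) -> (forall i, lip_grad (f i) Lg) ->
    (forall i, lip_hess (f i) Lb) -> (forall i, lip_third (f i) Lt) ->
    0 < eps -> 0 < kg -> 0 < kb -> 0 < kt -> 0 < delta < 1 ->
    (0 < ng)%N -> (0 < nb)%N -> (0 < nt)%N ->
    let polylog := (C * ((d.+1)%:R * (1 + ln (delta^-1))) ^+ p) in
    polylog * (Lf ^+ 2 / (kg ^+ 2 * eps ^+ 2)) <= ng%:R ->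
    polylog * (Lg ^+ 2 / (kb ^+ 2 * eps `^ (4 / 3))) <= nb%:R ->
    polylog * (Lb ^+ 2 / (kt ^+ 2 * eps `^ (2 / 3))) <= nt%:R ->
    let F := fun x => N%:R^-1 * \sum_i f i x in
    (* sample space: three independent i.i.d. uniform index samples
       (with replacement), with the uniform probability on the product *)
    let good (Sg : {ffun 'I_ng -> 'I_N}) (Sb : {ffun 'I_nb -> 'I_N})
             (St : {ffun 'I_nt -> 'I_N}) : Prop :=
      let gk := ng%:R^-1 *: \sum_(j < ng) grad (f (Sg j)) xk in
      let Bk := nb%:R^-1 *: \sum_(j < nb) hess (f (Sb j)) xk in
      let Tk := fun a b c => nt%:R^-1 * \sum_(j < nt) third (f (St j)) xk a b c in
      [/\ enorm (gk - grad F xk) <= kg * eps,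
          forall s, enorm (mxapp (Bk - hess F xk) s)
                    <= kb * eps `^ (2 / 3) * enorm s
        & forall s, enorm (tapp2 Tk s - tapp2 (third F xk) s)
                    <= kt * eps `^ (1 / 3) * enorm s ^+ 2] in
    1 - delta <=
      #|[set w : {ffun 'I_ng -> 'I_N} * {ffun 'I_nb -> 'I_N}
                 * {ffun 'I_nt -> 'I_N} | `[< good w.1.1 w.1.2 w.2 >]]|%:R
      / #|{: {ffun 'I_ng -> 'I_N} * {ffun 'I_nb -> 'I_N}
             * {ffun 'I_nt -> 'I_N}}|%:R.
Proof.
exists 160, 7; split; first lra.
move=> d N f Lf Lg Lb _ xk eps kg kb kt delta ng nb nt N0 C3f lipf lipg lipb _
  eps0 kg0 kb0 kt0 delta01 ng0 nb0 nt0 polylog hng hnb hnt.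
cbv zeta.
have eps_pow_sqr a b : a * 2 = b -> (eps `^ a) ^+ 2 = eps `^ b.
  by move=> <-; rewrite powR_sqr // ltW.
have size_g : sample_size d delta Lf (kg * eps) <= ng%:R.
  by rewrite /sample_size [(kg * _) ^+ 2]exprMn.
have size_b : sample_size d delta Lg (kb * eps `^ (2 / 3)) <= nb%:R.
  by rewrite /sample_size [(kb * _) ^+ 2]exprMn (eps_pow_sqr _ (4 / 3)) //; field.
have size_t : sample_size d delta Lb (kt * eps `^ (1 / 3)) <= nt%:R.
  by rewrite /sample_size [(kt * _) ^+ 2]exprMn (eps_pow_sqr _ (2 / 3)) //; field.
have bad_g := card_bad_grad_le xk N0 C3f delta01 (mulr_gt0 kg0 eps0) ng0 lipf size_g.
have bad_b := card_bad_hess_le xk N0 C3f delta01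
  (mulr_gt0 kb0 (powR_gt0 (2 / 3) eps0)) nb0 lipg size_b.
have bad_t := card_bad_third_le xk N0 C3f delta01
  (mulr_gt0 kt0 (powR_gt0 (1 / 3) eps0)) nt0 lipb size_t.
rewrite ler_pdivlMr; last first.
  by rewrite ltr0n !card_prod !card_ffun !card_ord !muln_gt0 !expn_gt0 N0.
rewrite (_ : 1 - delta = 1 - (delta / 3 + delta / 3 + delta / 3)); last by field.
apply: card_prod3_good_ge bad_g bad_b bad_t => -[[Sg Sb] St].
move=> /negbNE gA /negbNE /asboolP gB /negbNE /asboolP gC.
by rewrite inE; apply/asboolP; split.
Qed.
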